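(* Let $\mathcal{C}$ be an $R$-coring with a grouplike element $g$, let $B=\{r\in R: rg=gr\}$, and let $\tilde F=\bullet\otimes_B R:\mathcal{M}_B\to\mathcal{M}^{\mathcal{C}}_R$. Suppose there exists an $R$-bimodule map $\chi:\mathcal{C}\otimes_R\mathcal{C}\to R$ such that $c_{(1)}\chi(c_{(2)}\otimes_R d)=\chi(c\otimes_R d_{(1)})d_{(2)}$ for all $c,d\in\mathcal{C}$ and $\chi(g\otimes_R g)=1$. Then $\tilde F$ is fully faithful, i.e. it is separable and naturally full.
   Context: An $R$-coring is an $R$-bimodule $\mathcal{C}$ with coassociative, counital $R$-bimodule maps $\Delta_{\mathcal{C}}(c)=c_{(1)}\otimes_R c_{(2)}$ and $\varepsilon_{\mathcal{C}}:\mathcal{C}\to R$. $g\in\mathcal{C}$ is grouplike if $\Delta_{\mathcal{C}}(g)=g\otimes_R g$ and $\varepsilon_{\mathcal{C}}(g)=1$. $\mathcal{M}^{\mathcal{C}}_R$ is the category of right $\mathcal{C}$-comodules (right $R$-modules with right $R$-linear coassociative counital coaction $M\to M\otimes_R\mathcal{C}$). $B$ is a subring of $R$. For $N\in\mathcal{M}_B$, $N\otimes_B R$ is a right $\mathcal{C}$-comodule with coaction $n\otimes_B r\mapsto (n\otimes_B 1)\otimes_R gr$. A functor is separable (resp. naturally full) if the natural transformation $\mathrm{Hom}(A,A')\to\mathrm{Hom}(FA,FA')$, $f\mapsto F(f)$, has a left (resp. right) inverse natural in $A,A'$. *)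

(* Tensor products over (noncommutative) rings are not in
   the library; they are handled through their universal property. *)
From HB Require Import structures.
From mathcomp Require Import all_boot all_algebra.
Set Implicit Arguments. Unset Strict Implicit. Unset Printing Implicit Defensive.
Import GRing.Theory.
Local Open Scope ring_scope.

Definition additive_map (U V : zmodType) (f : U -> V) : Prop :=
  forall x y, f (x - y) = f x - f y.

Section Modules.
Variable S : pzRingType.

Definition is_rmod (M : zmodType) (act : M -> S -> M) : Prop :=
  [/\ forall s, additive_map (fun x => act x s),
      forall x r s, act x (r + s) = act x r + act x s,
      forall x, act x 1 = x &
      forall x r s, act (act x r) s = act x (r * s)].

Definition is_lmod (M : zmodType) (act : S -> M -> M) : Prop :=
  [/\ forall s, additive_map (act s),
      forall r s x, act (r + s) x = act r x + act s x,
      forall x, act 1 x = x &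
      forall r s x, act r (act s x) = act (r * s) x].

Definition is_bimod (M : zmodType) (l : S -> M -> M) (r : M -> S -> M) : Prop :=
  [/\ is_lmod l, is_rmod r & forall a x b, l a (r x b) = r (l a x) b].

Section Tensor.
Variables (M : zmodType) (mr : M -> S -> M) (N : zmodType) (nl : S -> N -> N).

Definition balanced (A : zmodType) (beta : M -> N -> A) : Prop :=
  [/\ forall m, additive_map (beta m),
      forall n, additive_map (fun m => beta m n) &
      forall m s n, beta (mr m s) n = beta m (nl s n)].

Definition induced (T A : zmodType) (t : M -> N -> T) (phi : T -> A)
    (beta : M -> N -> A) : Prop :=
  additive_map phi /\ forall m n, phi (t m n) = beta m n.

Definition is_tensor (T : zmodType) (t : M -> N -> T) : Prop :=
  balanced t /\
  forall (A : zmodType) (beta : M -> N -> A), balanced beta ->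
    (exists phi : T -> A, induced t phi beta) /\
    (forall phi psi : T -> A, induced t phi beta -> induced t psi beta ->
       phi =1 psi).
End Tensor.
End Modules.

Section Coring.
Variables (R : pzRingType) (C : zmodType) (lC : R -> C -> C) (rC : C -> R -> C).
(* CC = C (x)_R C, with its canonical R-bimodule structure lCC, rCC *)
Variables (CC : zmodType) (tCC : C -> C -> CC)
          (lCC : R -> CC -> CC) (rCC : CC -> R -> CC).
Variables (CCC : zmodType) (t3 : CC -> C -> CCC).
Variables (Delta : C -> CC) (eps : C -> R).

Definition is_tensor_square : Prop :=
  [/\ is_tensor rC lC tCC,
      (forall r, additive_map (lCC r)) /\ (forall r, additive_map (fun x => rCC x r)),
      forall r c d, lCC r (tCC c d) = tCC (lC r c) d &
      forall r c d, rCC (tCC c d) r = tCC c (rC d r)].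

Definition is_tensor_cube : Prop := is_tensor rCC lC t3.

(* (Delta (x) C) o Delta = (C (x) Delta) o Delta, read in (C (x) C) (x) C *)
Definition coassociative : Prop :=
  forall phi1 : CC -> CCC, induced tCC phi1 (fun x y => t3 (Delta x) y) ->
  forall psi : C -> CC -> CCC,
    (forall x, induced tCC (psi x) (fun u v => t3 (tCC x u) v)) ->
  forall phi2 : CC -> CCC, induced tCC phi2 (fun x y => psi x (Delta y)) ->
  forall c, phi1 (Delta c) = phi2 (Delta c).

(* eps(c_(1)) c_(2) = c = c_(1) eps(c_(2)) *)
Definition counital : Prop :=
  (forall phi : CC -> C, induced tCC phi (fun x y => lC (eps x) y) ->
     forall c, phi (Delta c) = c) /\
  (forall phi : CC -> C, induced tCC phi (fun x y => rC x (eps y)) ->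
     forall c, phi (Delta c) = c).

Definition is_coring : Prop :=
  [/\ is_bimod lC rC,
      additive_map Delta /\
        (forall r c, Delta (lC r c) = lCC r (Delta c)) /\
        (forall r c, Delta (rC c r) = rCC (Delta c) r),
      additive_map eps /\
        (forall r c, eps (lC r c) = r * eps c) /\
        (forall r c, eps (rC c r) = eps c * r),
      coassociative &
      counital].

Definition grouplike (g : C) : Prop := Delta g = tCC g g /\ eps g = 1.

Definition bimod_map_to_R (chi : CC -> R) : Prop :=
  [/\ additive_map chi,
      forall r x, chi (lCC r x) = r * chi x &
      forall r x, chi (rCC x r) = chi x * r].

(* c_(1) chi(c_(2) (x) d) = chi(c (x) d_(1)) d_(2) *)
Definition chi_condition (chi : CC -> R) : Prop :=
  forall (c d : C) (phi psi : CC -> C),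
    induced tCC phi (fun x y => rC x (chi (tCC y d))) ->
    induced tCC psi (fun x y => lC (chi (tCC c x)) y) ->
    phi (Delta c) = psi (Delta d).

Section Functor.
Variables (g : C) (B : pzRingType) (iota : {rmorphism B -> R}).

(* B is (isomorphic via iota to) the subring {r in R | r g = g r} *)
Definition is_coinvariant_subring : Prop :=
  injective iota /\ forall r : R, (exists b, iota b = r) <-> lC r g = rC g r.

(* Data of the comodule  N (x)_B R  attached to a right B-module N:
   T = N (x)_B R with tensor map tN, its right R-action aT,
   TC = T (x)_R C with tensor map tTC, and the coaction
   rho : n (x) r |-> (n (x) 1) (x) g r. *)
Definition induced_comodule (N : zmodType) (nB : N -> B -> N)
    (T : zmodType) (tN : N -> R -> T) (aT : T -> R -> T)
    (TC : zmodType) (tTC : T -> C -> TC) (rho : T -> TC) : Prop :=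
  [/\ is_rmod nB,
      is_tensor nB (fun b r => iota b * r) tN,
      (forall s, additive_map (fun x => aT x s)) /\
        (forall n r s, aT (tN n r) s = tN n (r * s)),
      is_tensor aT lC tTC &
      additive_map rho /\ (forall n r, rho (tN n r) = tTC (tN n 1) (rC g r))].

Section Hom.
Variables (N : zmodType) (nB : N -> B -> N)
          (T : zmodType) (tN : N -> R -> T) (aT : T -> R -> T)
          (TC : zmodType) (tTC : T -> C -> TC) (rho : T -> TC).
Variables (N' : zmodType) (nB' : N' -> B -> N')
          (T' : zmodType) (tN' : N' -> R -> T') (aT' : T' -> R -> T')
          (TC' : zmodType) (tTC' : T' -> C -> TC') (rho' : T' -> TC').

Definition B_linear (h : N -> N') : Prop :=
  additive_map h /\ forall n b, h (nB n b) = nB' (h n) b.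

Definition comodule_map (f : T -> T') : Prop :=
  [/\ additive_map f,
      forall x r, f (aT x r) = aT' (f x) r &
      forall fC : TC -> TC', induced tTC fC (fun x c => tTC' (f x) c) ->
        forall x, rho' (f x) = fC (rho x)].

Definition Ftilde_of (h : N -> N') (Fh : T -> T') : Prop :=
  induced tN Fh (fun n r => tN' (h n) r).

Definition Ftilde_fully_faithful_at : Prop :=
  (forall h h' : N -> N', B_linear h -> B_linear h' ->
     forall Fh Fh' : T -> T', Ftilde_of h Fh -> Ftilde_of h' Fh' ->
       Fh =1 Fh' -> h =1 h') /\
  (forall f : T -> T', comodule_map f ->
     exists h : N -> N', B_linear h /\ Ftilde_of h f).
End Hom.
End Functor.
End Coring.

(** The hypotheses on χ make E(r) := χ(gr ⊗ g) a conditional expectation of R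
    onto B: the χ-condition for c = gr and d = g says exactly that E(r) commutes
    with g, so E(r) ∈ B; E is B-bilinear, and χ(g ⊗ g) = 1 gives E(b) = b.
    Hence ret : n ⊗ r ↦ n E(r) is a natural retraction of n ↦ n ⊗ 1, so F~ is
    faithful.  For fullness, y ⊗ c ↦ y χ(c ⊗ g) sends the coaction of n ⊗ r to
    n ⊗ E(r), so every coinvariant x of N ⊗_B R equals ret(x) ⊗ 1; as g is
    grouplike, a colinear f maps each n ⊗ 1 to a coinvariant, whence
    f = F~(n ↦ ret(f(n ⊗ 1))). *)
From HB Require Import structures.
From mathcomp Require Import all_boot all_algebra.
Import GRing.Theory.
Local Open Scope ring_scope.
Set Implicit Arguments.

Section AdditiveMaps.
Variables U V W : zmodType.

Lemma additive_map0 (f : U -> V) : additive_map f -> f 0 = 0.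
Proof. by move=> fB; rewrite -(subrr 0) fB subrr. Qed.

Lemma additive_mapN (f : U -> V) : additive_map f -> {morph f : x / - x}.
Proof. by move=> fB x; rewrite -sub0r fB (additive_map0 fB) sub0r. Qed.

Lemma additive_mapD (f : U -> V) : additive_map f -> {morph f : x y / x + y}.
Proof. by move=> fB x y; rewrite -{1}[y]opprK fB (additive_mapN fB) opprK. Qed.

Lemma morphD_additive_map (f : U -> V) :
  {morph f : x y / x + y} -> additive_map f.
Proof. by move=> fD x y; apply/eqP; rewrite eq_sym subr_eq -fD subrK. Qed.

Lemma additive_map_comp (f : V -> W) (h : U -> V) :
  additive_map f -> additive_map h -> additive_map (fun x => f (h x)).
Proof. by move=> fB hB x y; rewrite hB fB. Qed.

Lemma additive_map_add (f h : U -> V) :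
  additive_map f -> additive_map h -> additive_map (fun x => f x + h x).
Proof. by move=> fB hB x y; rewrite fB hB opprD addrACA. Qed.

End AdditiveMaps.

Section TensorUniversalProperty.
Variables (S : pzRingType) (M N T : zmodType).
Variables (mr : M -> S -> M) (nl : S -> N -> N) (t : M -> N -> T).
Hypothesis tensorT : is_tensor mr nl t.

Lemma tensor_balanced : balanced mr nl t.
Proof. by case: tensorT. Qed.

Lemma tensorDl n : {morph t^~ n : m1 m2 / m1 + m2}.
Proof. by case: tensor_balanced => _ tB _; apply: additive_mapD. Qed.

Lemma tensorDr m : {morph t m : n1 n2 / n1 + n2}.
Proof. by case: tensor_balanced => tB _ _; apply: additive_mapD. Qed.

Lemma tensor_lift (A : zmodType) (beta : M -> N -> A) :
  balanced mr nl beta -> exists phi, induced t phi beta.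
Proof. by case: tensorT => _ UP /UP[]. Qed.

Lemma tensor_ext (A : zmodType) (phi psi : T -> A) :
  additive_map phi -> additive_map psi ->
  (forall m n, phi (t m n) = psi (t m n)) -> phi =1 psi.
Proof.
move=> phiB psiB eq_phi_psi; have [tBr tBl tbal] := tensor_balanced.
have phi_tbal : balanced mr nl (fun m n => phi (t m n)).
  split=> [m|n|m s n]; last by rewrite tbal.
  - exact: additive_map_comp phiB (tBr m).
  - exact: additive_map_comp phiB (tBl n).
case: tensorT => _ /(_ A _ phi_tbal)[_ uniq].
by apply: uniq; split.
Qed.

End TensorUniversalProperty.

Lemma tensor_rmod (S R : pzRingType) (N T : zmodType) (nS : N -> S -> N)
    (lR : S -> R -> R) (tN : N -> R -> T) (aT : T -> R -> T) :
  is_tensor nS lR tN ->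
  (forall s, additive_map (fun x => aT x s)) ->
  (forall n r s, aT (tN n r) s = tN n (r * s)) ->
  is_rmod aT.
Proof.
move=> tensorT aTB aT_tN.
split=> // [x r s|x|x r s]; move: x.
- apply: (tensor_ext tensorT (phi := aT^~ (r + s)) (psi := fun x => aT x r + aT x s)).
  + exact: aTB.
  + exact: additive_map_add.
  + by move=> n u; rewrite !aT_tN mulrDr (tensorDr tensorT).
- apply: (tensor_ext tensorT (phi := aT^~ 1) (psi := id)) => //.
  by move=> n u; rewrite aT_tN mulr1.
- apply: (tensor_ext tensorT (phi := fun x => aT (aT x r) s) (psi := aT^~ (r * s))).
  + exact: additive_map_comp (aTB s) (aTB r).
  + exact: aTB.
  + by move=> n u; rewrite !aT_tN mulrA.
Qed.

Section ConditionalExpectation.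
Variables (R : pzRingType) (C : zmodType) (lC : R -> C -> C) (rC : C -> R -> C).
Variables (CC : zmodType) (tCC : C -> C -> CC) (lCC : R -> CC -> CC) (rCC : CC -> R -> CC).
Variables (Delta : C -> CC) (g : C) (B : pzRingType) (iota : {rmorphism B -> R}).
Variable chi : CC -> R.

Hypothesis squareCC : is_tensor_square lC rC tCC lCC rCC.
Hypothesis bimodC : is_bimod lC rC.
Hypothesis DeltaR : forall r c, Delta (rC c r) = rCC (Delta c) r.
Hypothesis Delta_g : Delta g = tCC g g.
Hypothesis coinvB : is_coinvariant_subring lC rC g iota.
Hypothesis chi_bimod : bimod_map_to_R lCC rCC chi.
Hypothesis chi_cond : chi_condition lC rC tCC Delta chi.
Hypothesis chi_gg : chi (tCC g g) = 1.

Definition expectation r := chi (tCC (rC g r) g).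

Let tensorCC : is_tensor rC lC tCC. Proof. by case: squareCC. Qed.
Let lCC_tCC r c d : lCC r (tCC c d) = tCC (lC r c) d. Proof. by case: squareCC. Qed.
Let rCC_tCC r c d : rCC (tCC c d) r = tCC c (rC d r). Proof. by case: squareCC. Qed.
Let chiD : {morph chi : x y / x + y}. Proof. by case: chi_bimod => /additive_mapD. Qed.
Let chiL r x : chi (lCC r x) = r * chi x. Proof. by case: chi_bimod. Qed.
Let chiR r x : chi (rCC x r) = chi x * r. Proof. by case: chi_bimod. Qed.
Let lmodC : is_lmod lC. Proof. by case: bimodC. Qed.
Let rmodC : is_rmod rC. Proof. by case: bimodC. Qed.
Let lCrC r c s : lC r (rC c s) = rC (lC r c) s. Proof. by case: bimodC. Qed.

Let iota_centralizes b : lC (iota b) g = rC g (iota b).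
Proof. by apply/(proj2 coinvB); exists b. Qed.

Lemma expectation_centralizes r : lC (expectation r) g = rC g (expectation r).
Proof.
have [lCB lCD _ lCM] := lmodC; have [rCB rCD _ rCM] := rmodC.
have [phi phiI] : exists phi, induced tCC phi (fun x y => rC x (chi (tCC y g))).
  apply: (tensor_lift tensorCC); split=> [x|y|x s y].
  - by apply: morphD_additive_map => y1 y2; rewrite (tensorDl tensorCC) chiD rCD.
  - exact: rCB.
  - by rewrite rCM -lCC_tCC chiL.
have [psi psiI] :
    exists psi, induced tCC psi (fun x y => lC (chi (tCC (rC g r) x)) y).
  apply: (tensor_lift tensorCC); split=> [x|y|x s y].
  - exact: lCB.
  - by apply: morphD_additive_map => x1 x2; rewrite (tensorDr tensorCC) chiD lCD.
  - by rewrite lCM -rCC_tCC chiR.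
have := chi_cond phiI psiI.
by rewrite DeltaR Delta_g rCC_tCC (proj2 phiI) (proj2 psiI) => ->.
Qed.

Lemma expectation_iota b : expectation (iota b) = iota b.
Proof. by rewrite /expectation -iota_centralizes -lCC_tCC chiL chi_gg mulr1. Qed.

Lemma expectationD : {morph expectation : r s / r + s}.
Proof.
have [_ rCD _ _] := rmodC.
by move=> r s; rewrite /expectation rCD (tensorDl tensorCC) chiD.
Qed.

Lemma expectation_iotaMl b r : expectation (iota b * r) = iota b * expectation r.
Proof.
have [_ _ _ rCM] := rmodC.
by rewrite /expectation -rCM -iota_centralizes -lCrC -lCC_tCC chiL.
Qed.

Lemma expectation_iotaMr b r : expectation (r * iota b) = expectation r * iota b.
Proof.
have [_ _ tCCbal] := tensor_balanced tensorCC; have [_ _ _ rCM] := rmodC.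
by rewrite /expectation -rCM tCCbal iota_centralizes -rCC_tCC chiR.
Qed.

Lemma expectation_retraction : exists E : R -> B,
  [/\ forall r, iota (E r) = expectation r, E 1 = 1, additive_map E,
      forall b r, E (iota b * r) = b * E r & forall b r, E (r * iota b) = E r * b].
Proof.
have [iota_inj iotaP] := coinvB.
have inB r : exists b, iota b == expectation r.
  by have [b <-] := (iotaP _).2 (expectation_centralizes r); exists b.
pose E r := xchoose (inB r).
have iotaE r : iota (E r) = expectation r by apply/eqP/(xchooseP (inB r)).
exists E; split=> // [||b r|b r].
- by apply: iota_inj; rewrite iotaE rmorph1 -(rmorph1 iota) expectation_iota.
- apply: morphD_additive_map => r s; apply: iota_inj.
  by rewrite rmorphD !iotaE expectationD.
- by apply: iota_inj; rewrite rmorphM !iotaE expectation_iotaMl.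
- by apply: iota_inj; rewrite rmorphM !iotaE expectation_iotaMr.
Qed.

End ConditionalExpectation.

Arguments expectation {R C} rC {CC} tCC g chi r.

Section FullyFaithful.
Variables (R : pzRingType) (C : zmodType) (lC : R -> C -> C) (rC : C -> R -> C).
Variables (CC : zmodType) (tCC : C -> C -> CC) (lCC : R -> CC -> CC) (rCC : CC -> R -> CC).
Variables (g : C) (B : pzRingType) (iota : {rmorphism B -> R}) (chi : CC -> R).
Variable E : R -> B.

Hypothesis squareCC : is_tensor_square lC rC tCC lCC rCC.
Hypothesis rC_g1 : rC g 1 = g.
Hypothesis chi_bimod : bimod_map_to_R lCC rCC chi.
Hypothesis chi_gg : chi (tCC g g) = 1.
Hypothesis iotaE : forall r, iota (E r) = expectation rC tCC g chi r.
Hypothesis E1 : E 1 = 1.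
Hypothesis EB : additive_map E.
Hypothesis E_iotaMl : forall b r, E (iota b * r) = b * E r.
Hypothesis E_iotaMr : forall b r, E (r * iota b) = E r * b.

Variables (N : zmodType) (nB : N -> B -> N) (T : zmodType) (tN : N -> R -> T).
Variables (aT : T -> R -> T) (TC : zmodType) (tTC : T -> C -> TC) (rho : T -> TC).
Variables (N' : zmodType) (nB' : N' -> B -> N') (T' : zmodType) (tN' : N' -> R -> T').
Variables (aT' : T' -> R -> T') (TC' : zmodType) (tTC' : T' -> C -> TC') (rho' : T' -> TC').
Hypothesis comodN : induced_comodule lC rC g iota nB tN aT tTC rho.
Hypothesis comodN' : induced_comodule lC rC g iota nB' tN' aT' tTC' rho'.

Let tensorCC : is_tensor rC lC tCC. Proof. by case: squareCC. Qed.
Let lCC_tCC r c d : lCC r (tCC c d) = tCC (lC r c) d. Proof. by case: squareCC. Qed.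
Let chiD : {morph chi : x y / x + y}. Proof. by case: chi_bimod => /additive_mapD. Qed.
Let chiL r x : chi (lCC r x) = r * chi x. Proof. by case: chi_bimod. Qed.

Let tensorN : is_tensor nB (fun b r => iota b * r) tN. Proof. by case: comodN. Qed.
Let aT_tN n r s : aT (tN n r) s = tN n (r * s). Proof. by case: comodN => _ _ []. Qed.
Let tensorTC : is_tensor aT lC tTC. Proof. by case: comodN. Qed.
Let rho_tN n r : rho (tN n r) = tTC (tN n 1) (rC g r).
Proof. by case: comodN => _ _ _ _ []. Qed.

Let rmodN' : is_rmod nB'. Proof. by case: comodN'. Qed.
Let tensorN' : is_tensor nB' (fun b r => iota b * r) tN'. Proof. by case: comodN'. Qed.
Let aT'B s : additive_map (aT'^~ s). Proof. by case: comodN' => _ _ []. Qed.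
Let aT'_tN' n r s : aT' (tN' n r) s = tN' n (r * s). Proof. by case: comodN' => _ _ []. Qed.
Let rmodT' : is_rmod aT'. Proof. exact: tensor_rmod tensorN' aT'B aT'_tN'. Qed.
Let tensorTC' : is_tensor aT' lC tTC'. Proof. by case: comodN'. Qed.
Let rho'B : additive_map rho'. Proof. by case: comodN' => _ _ _ _ []. Qed.
Let rho'_tN' n r : rho' (tN' n r) = tTC' (tN' n 1) (rC g r).
Proof. by case: comodN' => _ _ _ _ []. Qed.

Section Retraction.
Variable ret : T' -> N'.
Hypothesis retI : induced tN' ret (fun n r => nB' n (E r)).

Lemma Ftilde_retract h Fh : Ftilde_of tN tN' h Fh -> forall n, ret (Fh (tN n 1)) = h n.
Proof. by case: rmodN' => _ _ nB'1 _ [_ FhE] n; rewrite FhE retI.2 E1 nB'1. Qed.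

Lemma ret_aT'_iota b y : ret (aT' y (iota b)) = nB' (ret y) b.
Proof.
have [retB retE] := retI; have [nB'B _ _ nB'M] := rmodN'.
move: y; apply: (tensor_ext tensorN' (phi := fun y => ret (aT' y (iota b)))
                                     (psi := fun y => nB' (ret y) b)).
- exact: additive_map_comp retB (aT'B _).
- exact: additive_map_comp (nB'B b) retB.
- by move=> n r; rewrite aT'_tN' !retE E_iotaMr nB'M.
Qed.

Lemma coinvariant_tensor1 x : rho' x = tTC' x g -> x = tN' (ret x) 1.
Proof.
have [_ aT'D aT'1 aT'M] := rmodT'; have [_ tN'B tN'bal] := tensor_balanced tensorN'.
have [Q [QB QE]] : exists Q, induced tTC' Q (fun y c => aT' y (chi (tCC c g))).
  apply: (tensor_lift tensorTC'); split=> [y|c|y s c].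
  - by apply: morphD_additive_map => c d; rewrite (tensorDl tensorCC) chiD aT'D.
  - exact: aT'B.
  - by rewrite aT'M -lCC_tCC chiL.
have Q_rho' y : Q (rho' y) = tN' (ret y) 1.
  move: y; apply: (tensor_ext tensorN' (phi := fun y => Q (rho' y))
                                       (psi := fun y => tN' (ret y) 1)).
  - exact: additive_map_comp QB rho'B.
  - exact: additive_map_comp (tN'B 1) retI.1.
  - move=> n r; rewrite rho'_tN' QE aT'_tN' mul1r.
    by rewrite -[chi _]/(expectation rC tCC g chi r) -iotaE retI.2 tN'bal mulr1.
by move=> rho'x; rewrite -Q_rho' rho'x QE chi_gg aT'1.
Qed.

Section ComoduleMap.
Variable f : T -> T'.
Hypothesis f_comod : comodule_map aT tTC rho aT' tTC' rho' f.

Lemma comodule_map_coinvariant n : rho' (f (tN n 1)) = tTC' (f (tN n 1)) g.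
Proof.
have [fB fR fC] := f_comod; have [tTC'B tTC'Bl tTC'bal] := tensor_balanced tensorTC'.
have [fC' fC'I] : exists fC', induced tTC fC' (fun x c => tTC' (f x) c).
  apply: (tensor_lift tensorTC); split=> [x|c|x s c].
  - exact: tTC'B.
  - exact: additive_map_comp (tTC'Bl c) fB.
  - by rewrite fR tTC'bal.
by rewrite (fC _ fC'I) rho_tN rC_g1 fC'I.2.
Qed.

Lemma comodule_map_Ftilde :
  let h n := ret (f (tN n 1)) in B_linear nB nB' h /\ Ftilde_of tN tN' h f.
Proof.
have [fB fR _] := f_comod; have [_ tNB tNbal] := tensor_balanced tensorN.
have f_tN n r : f (tN n r) = aT' (f (tN n 1)) r by rewrite -fR aT_tN mul1r.
split; first split.
- exact: additive_map_comp retI.1 (additive_map_comp fB (tNB 1)).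
- by move=> n b; rewrite tNbal mulr1 f_tN ret_aT'_iota.
- split=> // n r.
  by rewrite f_tN {1}(coinvariant_tensor1 (comodule_map_coinvariant n)) aT'_tN' mul1r.
Qed.

End ComoduleMap.
End Retraction.

Lemma Ftilde_fully_faithful :
  Ftilde_fully_faithful_at nB tN aT tTC rho nB' tN' aT' tTC' rho'.
Proof.
have [nB'B nB'D _ nB'M] := rmodN'.
have [ret retI] : exists ret, induced tN' ret (fun n r => nB' n (E r)).
  apply: (tensor_lift tensorN'); split=> [n|r|n b r].
  - by apply: morphD_additive_map => r s; rewrite (additive_mapD EB) nB'D.
  - exact: nB'B.
  - by rewrite nB'M E_iotaMl.
split=> [h h' _ _ Fh Fh' Fh_h Fh'_h' eqF n|f f_comod].
- by rewrite -(Ftilde_retract retI Fh_h) -(Ftilde_retract retI Fh'_h') eqF.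
- by eexists; apply: (comodule_map_Ftilde retI f_comod).
Qed.

End FullyFaithful.

Unset Implicit Arguments.

Theorem proposition3p18
  (R : pzRingType) (C : zmodType) (lC : R -> C -> C) (rC : C -> R -> C)
  (CC : zmodType) (tCC : C -> C -> CC) (lCC : R -> CC -> CC) (rCC : CC -> R -> CC)
  (CCC : zmodType) (t3 : CC -> C -> CCC)
  (Delta : C -> CC) (eps : C -> R) (g : C)
  (B : pzRingType) (iota : {rmorphism B -> R}) (chi : CC -> R) :
  is_tensor_square lC rC tCC lCC rCC ->
  is_tensor_cube lC rCC t3 ->
  is_coring lC rC tCC lCC rCC t3 Delta eps ->
  grouplike tCC Delta eps g ->
  is_coinvariant_subring lC rC g iota ->
  bimod_map_to_R lCC rCC chi ->
  chi_condition lC rC tCC Delta chi ->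
  chi (tCC g g) = 1 ->
  forall (N : zmodType) (nB : N -> B -> N)
         (T : zmodType) (tN : N -> R -> T) (aT : T -> R -> T)
         (TC : zmodType) (tTC : T -> C -> TC) (rho : T -> TC)
         (N' : zmodType) (nB' : N' -> B -> N')
         (T' : zmodType) (tN' : N' -> R -> T') (aT' : T' -> R -> T')
         (TC' : zmodType) (tTC' : T' -> C -> TC') (rho' : T' -> TC'),
  induced_comodule lC rC g iota nB tN aT tTC rho ->
  induced_comodule lC rC g iota nB' tN' aT' tTC' rho' ->
  Ftilde_fully_faithful_at nB tN aT tTC rho nB' tN' aT' tTC' rho'.
Proof.
move=> squareCC _ [bimodC [_ [_ DeltaR]] _ _ _] [Delta_g _] coinvB chi_bimod chi_cond chi_gg.
move=> N nB T tN aT TC tTC rho N' nB' T' tN' aT' TC' tTC' rho' comodN comodN'.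
have [E [iotaE E1 EB E_iotaMl E_iotaMr]] := expectation_retraction squareCC bimodC
  DeltaR Delta_g coinvB chi_bimod chi_cond chi_gg.
have rC_g1 : rC g 1 = g by case: bimodC => _ [].
exact: (Ftilde_fully_faithful squareCC rC_g1 chi_bimod chi_gg iotaE E1 EB
  E_iotaMl E_iotaMr comodN comodN').
Qed.
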